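(* Let $n\ge 3$ be an odd integer and $(\mathcal{C},\Sigma)$ a tensor $n$-angulated category. Then the Grothendieck group $K_0(\mathcal{C})$ is a commutative ring with multiplication given by $[A][B]=[A\otimes B]$ for objects $A,B$ of $\mathcal{C}$ (in particular this multiplication is well defined).
   Context: All categories are small. Fix an integer $n\ge 3$. Let $\mathcal{C}$ be an additive category with an automorphism $\Sigma$. An $n$-$\Sigma$-sequence in $\mathcal{C}$ is a diagram $A_1\xrightarrow{\alpha_1}A_2\xrightarrow{\alpha_2}\cdots\xrightarrow{\alpha_{n-1}}A_n\xrightarrow{\alpha_n}\Sigma A_1$. Its left rotation is $A_2\xrightarrow{\alpha_2}\cdots\xrightarrow{\alpha_n}\Sigma A_1\xrightarrow{(-1)^n\Sigma\alpha_1}\Sigma A_2$. A morphism from $(A_\bullet,\alpha)$ to $(B_\bullet,\beta)$ is a tuple $(\varphi_1,\dots,\varphi_n)$, $\varphi_i:A_i\to B_i$, with $\beta_i\varphi_i=\varphi_{i+1}\alpha_i$ for $1\le i\le n-1$ and $\beta_n\varphi_n=(\Sigma\varphi_1)\alpha_n$; it is an isomorphism if all $\varphi_i$ are isomorphisms. Direct sums of sequences are taken termwise. $(\mathcal{C},\Sigma)$ is $n$-angulated if it is equipped with a collection $\mathscr N$ of $n$-$\Sigma$-sequences, called $n$-angles, such that: (N1)(a) $\mathscr N$ is closed under direct sums, direct summands and isomorphisms of $n$-$\Sigma$-sequences; (b) for every object $A$, the trivial sequence $A\xrightarrow{1}A\to0\to\cdots\to0\to\Sigma A$ is in $\mathscr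 N$; (c) every morphism $A_1\to A_2$ is the first morphism of some $n$-angle; (N2) an $n$-$\Sigma$-sequence is in $\mathscr N$ iff its left rotation is; (N3) given $n$-angles $(A_\bullet,\alpha),(B_\bullet,\beta)$ and $\varphi_1:A_1\to B_1$, $\varphi_2:A_2\to B_2$ with $\beta_1\varphi_1=\varphi_2\alpha_1$, there exist $\varphi_3,\dots,\varphi_n$ making $(\varphi_1,\dots,\varphi_n)$ a morphism; (N4) in (N3) the $\varphi_i$ can be chosen so that the mapping cone $A_2\oplus B_1\to A_3\oplus B_2\to\cdots\to\Sigma A_1\oplus B_n\to\Sigma A_2\oplus\Sigma B_1$, with maps $\left[\begin{smallmatrix}-\alpha_{i+1}&0\\ \varphi_{i+1}&\beta_i\end{smallmatrix}\right]$ ($1\le i\le n-1$) and last map $\left[\begin{smallmatrix}-\Sigma\alpha_1&0\\ \Sigma\varphi_1&\beta_n\end{smallmatrix}\right]$, is an $n$-angle. Grothendieck group: $F(\mathcal{C})$ is the free abelian group on isomorphism classes $\langle A\rangle$ of objects; for an $n$-angle $A_\bullet$, $\chi(A_\bullet)=\sum_{i=1}^n(-1)^{i+1}\langle A_i\rangle$; $R(\mathcal{C})$ is generated by all $\chi(A_\bullet)$, together with $\langle 0\rangle$ when $n$ is even; $K_0(\mathcal{C})=F(\mathcal{C})/R(\mathcal{C})$, $[A]$ the class of $\langle A\rangle$. An $n$-angulated category $(\mathcal{C},\Sigma)$ is tensor $n$-angulated if it carries a symmetric monoidal (symmetric tensor) structure $(\otimes,I,\alpha,\lambda,\rho,\gamma)$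 with $\otimes$ an additive bifunctor, such that: (1) there are natural isomorphisms $l:A\otimes\Sigma B\to\Sigma(A\otimes B)$ and $r:\Sigma A\otimes B\to\Sigma(A\otimes B)$; (2) for every object $A$, the functors $A\otimes-$ (with $l$) and $-\otimes A$ (with $r$) are $n$-angulated, i.e. for every $n$-angle $A_1\xrightarrow{\alpha_1}\cdots\xrightarrow{\alpha_{n-1}}A_n\xrightarrow{\alpha_n}\Sigma A_1$ the sequences $A\otimes A_1\xrightarrow{1\otimes\alpha_1}\cdots\xrightarrow{1\otimes\alpha_{n-1}}A\otimes A_n\xrightarrow{l\circ(1\otimes\alpha_n)}\Sigma(A\otimes A_1)$ and $A_1\otimes A\xrightarrow{\alpha_1\otimes1}\cdots\xrightarrow{\alpha_{n-1}\otimes 1}A_n\otimes A\xrightarrow{r\circ(\alpha_n\otimes1)}\Sigma(A_1\otimes A)$ are $n$-angles; (3) $\lambda_{\Sigma A}=\Sigma\lambda_A\circ l$ and $\rho_{\Sigma A}=\Sigma\rho_A\circ r$ for all $A$; (4) $\Sigma l\circ r=-\,\Sigma r\circ l$ as maps $\Sigma A\otimes\Sigma B\to\Sigma^2(A\otimes B)$ for all $A,B$. *)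

From HB Require Import structures.
From mathcomp Require Import all_boot all_algebra.
From mathcomp Require Import boolp.
From mathcomp Require Import freeg.
From mathcomp Require Import ring_quotient.

Set Implicit Arguments.
Unset Strict Implicit.
Unset Printing Implicit Defensive.

Import GRing.Theory.
Local Open Scope ring_scope.
Local Open Scope quotient_scope.

Record precat := PreCat {
  Obj : Type;
  Hom : Obj -> Obj -> zmodType;
  mcomp : forall A B D : Obj, Hom B D -> Hom A B -> Hom A D;
  idm : forall A : Obj, Hom A A }.

Arguments Hom {p}.
Arguments mcomp {p A B D}.
Arguments idm {p}.

Section CatDefs.
Variable C : precat.
Local Notation Obj := (Obj C).

Definition is_iso {A B : Obj} (f : Hom A B) : Prop :=
  exists g : Hom B A, mcomp g f = idm A /\ mcomp f g = idm B.

Definition is_zero_obj (Z : Obj) : Prop :=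
  forall X : Obj, (forall f g : Hom Z X, f = g) /\ (forall f g : Hom X Z, f = g).

Definition is_biprod {A B S : Obj} (i1 : Hom A S) (i2 : Hom B S)
  (p1 : Hom S A) (p2 : Hom S B) : Prop :=
  [/\ mcomp p1 i1 = idm A, mcomp p2 i2 = idm B, mcomp p1 i2 = 0, mcomp p2 i1 = 0
    & mcomp i1 p1 + mcomp i2 p2 = idm S].

Record is_additive_cat : Prop := {
  compA : forall (A B D E : Obj) (h : Hom D E) (g : Hom B D) (f : Hom A B),
         mcomp h (mcomp g f) = mcomp (mcomp h g) f;
  comp1f : forall (A B : Obj) (f : Hom A B), mcomp (idm B) f = f;
  compf1 : forall (A B : Obj) (f : Hom A B), mcomp f (idm A) = f;
  compDl : forall (A B D : Obj) (g g' : Hom B D) (f : Hom A B),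
         mcomp (g + g') f = mcomp g f + mcomp g' f;
  compDr : forall (A B D : Obj) (g : Hom B D) (f f' : Hom A B),
         mcomp g (f + f') = mcomp g f + mcomp g f';
  zero_obj_exists : exists Z : Obj, is_zero_obj Z;
  biprod_exists : forall A B : Obj, exists (S : Obj) (i1 : Hom A S) (i2 : Hom B S)
          (p1 : Hom S A) (p2 : Hom S B), is_biprod i1 i2 p1 p2 }.

(* morphisms packed with their source and target, so that morphisms with
   propositionally (not definitionally) equal endpoints can be compared *)
Definition arrow := {AB : Obj * Obj & Hom AB.1 AB.2}.
Definition arr {A B : Obj} (f : Hom A B) : arrow :=
  existT (fun AB : Obj * Obj => Hom AB.1 AB.2) (A, B) f.

End CatDefs.

Record endofunctor (C : precat) := EndoFunctor {
  Fo : Obj C -> Obj C;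
  Fm : forall A B : Obj C, Hom A B -> Hom (Fo A) (Fo B) }.
Arguments Fo {C}.
Arguments Fm {C} _ {A B}.

Definition is_additive_automorphism (C : precat) (S : endofunctor C) : Prop :=
  [/\ (forall A : Obj C, Fm S (idm A) = idm (Fo S A)),
      (forall (A B D : Obj C) (g : Hom B D) (f : Hom A B),
         Fm S (mcomp g f) = mcomp (Fm S g) (Fm S f)),
      (forall (A B : Obj C) (f g : Hom A B), Fm S (f + g) = Fm S f + Fm S g),
      bijective (Fo S)
    & (forall A B : Obj C, bijective (@Fm C S A B))].

(* n-Sigma-sequences.  Convention: m := n - 1, i.e. n = m.+1.          *)
(* A sequence A_1 -a_1-> A_2 -> ... -> A_n -a_n-> Sigma A_1 is stored  *)
(* as  nob i = A_i  (1 <= i <= n),  nmo i = a_i  (1 <= i <= n-1) and   *)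
(* nlast = a_n; the values of nob/nmo at other indices are irrelevant. *)
Section NSeq.
Variables (C : precat) (S : endofunctor C) (m : nat).
Local Notation n := m.+1.
Local Notation Obj := (Obj C).
Local Notation Sg := (Fo S).
Local Notation Sm := (Fm S).

Record nSseq := NSeq {
  nob : nat -> Obj;
  nmo : forall i : nat, Hom (nob i) (nob i.+1);
  nlast : Hom (nob n) (Sg (nob 1)) }.

Definition is_nmor (X Y : nSseq) (phi : forall i, Hom (nob X i) (nob Y i)) : Prop :=
  (forall i, 0 < i < n -> mcomp (nmo Y i) (phi i) = mcomp (phi i.+1) (nmo X i))%N
  /\ mcomp (nlast Y) (phi n) = mcomp (Sm (phi 1%N)) (nlast X).

Definition is_niso (X Y : nSseq) (phi : forall i, Hom (nob X i) (nob Y i)) : Prop :=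
  is_nmor phi /\ (forall i, 0 < i <= n -> is_iso (phi i))%N.

Definition is_nsum (Z X Y : nSseq) : Prop :=
  exists (i1 : forall i, Hom (nob X i) (nob Z i)) (i2 : forall i, Hom (nob Y i) (nob Z i))
         (p1 : forall i, Hom (nob Z i) (nob X i)) (p2 : forall i, Hom (nob Z i) (nob Y i)),
    [/\ is_nmor i1, is_nmor i2, is_nmor p1, is_nmor p2
      & forall i, (0 < i <= n)%N -> is_biprod (i1 i) (i2 i) (p1 i) (p2 i)].

Definition triv_ob (A Z : Obj) (i : nat) : Obj :=
  match i with 1 | 2 => A | _ => Z end.
Definition triv_mo (A Z : Obj) (i : nat) : Hom (triv_ob A Z i) (triv_ob A Z i.+1) :=
  match i return Hom (triv_ob A Z i) (triv_ob A Z i.+1) with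
  | 1 => idm A
  | _ => 0
  end.
Definition triv_nseq (A Z : Obj) : nSseq := NSeq (triv_mo A Z) 0.

(* Y is the left rotation of X:
   A_2 -a_2-> ... -> A_n -a_n-> Sigma A_1 -(-1)^n Sigma a_1-> Sigma A_2
   (equalities of morphisms together with their sources and targets) *)
Definition is_left_rotation (X Y : nSseq) : Prop :=
  [/\ (forall i, (0 < i < m)%N -> arr (nmo Y i) = arr (nmo X i.+1)),
      arr (nmo Y m) = arr (nlast X)
    & arr (nlast Y) = arr (Sm (nmo X 1%N) *~ ((-1) ^+ n))].

(* Z is the mapping cone of phi : X -> Y, i.e. the sequence
   A_2+B_1 -> A_3+B_2 -> ... -> A_n+B_(n-1) -> Sigma A_1 + B_n -> Sigma A_2 + Sigma B_1
   with the matrices [[-a_(i+1), 0], [phi_(i+1), b_i]] and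
   [[-Sigma a_1, 0], [Sigma phi_1, b_n]], where each term of Z is a biproduct
   of the indicated objects (uA, uB, qA, qB for 1 <= i <= n-1; vA, vB, wA, wB for
   the n-th term; Sigma Z_1 carries the image under Sigma of the biproduct
   structure of Z_1). *)
Definition is_cone (X Y : nSseq) (phi : forall i, Hom (nob X i) (nob Y i)) (Z : nSseq) : Prop :=
  exists (uA : forall i, Hom (nob X i.+1) (nob Z i)) (uB : forall i, Hom (nob Y i) (nob Z i))
         (qA : forall i, Hom (nob Z i) (nob X i.+1)) (qB : forall i, Hom (nob Z i) (nob Y i))
         (vA : Hom (Sg (nob X 1%N)) (nob Z n)) (vB : Hom (nob Y n) (nob Z n))
         (wA : Hom (nob Z n) (Sg (nob X 1%N))) (wB : Hom (nob Z n) (nob Y n)),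
  [/\ forall i, (0 < i < n)%N -> is_biprod (uA i) (uB i) (qA i) (qB i),
      is_biprod vA vB wA wB,
      forall i, (0 < i < m)%N ->
        nmo Z i = mcomp (uA i.+1) (mcomp (- nmo X i.+1) (qA i))
                  + mcomp (uB i.+1) (mcomp (phi i.+1) (qA i))
                  + mcomp (uB i.+1) (mcomp (nmo Y i) (qB i)),
      nmo Z m = mcomp vA (mcomp (- nlast X) (qA m))
                + mcomp vB (mcomp (phi n) (qA m))
                + mcomp vB (mcomp (nmo Y m) (qB m))
    & nlast Z = mcomp (Sm (uA 1%N)) (mcomp (- Sm (nmo X 1%N)) wA)
                + mcomp (Sm (uB 1%N)) (mcomp (Sm (phi 1%N)) wA)
                + mcomp (Sm (uB 1%N)) (mcomp (nlast Y) wB)].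

Record is_nangulated (N : nSseq -> Prop) : Prop := {
  nang_additive : is_additive_cat C;
  nang_Sigma_auto : is_additive_automorphism S;
  N1a_sum : forall X Y Z : nSseq, is_nsum Z X Y -> N X -> N Y -> N Z;
  N1a_summand : forall X Y Z : nSseq, is_nsum Z X Y -> N Z -> N X;
  N1a_iso : forall (X Y : nSseq) (phi : forall i, Hom (nob X i) (nob Y i)),
         is_niso phi -> N X -> N Y;
  N1b : forall A Z : Obj, is_zero_obj Z -> N (triv_nseq A Z);
  N1c : forall (A1 A2 : Obj) (f : Hom A1 A2),
         exists X : nSseq, N X /\ arr (nmo X 1%N) = arr f;
  N2 : forall X Y : nSseq, is_left_rotation X Y -> (N X <-> N Y);
  N3 : forall X Y : nSseq, N X -> N Y ->
      forall (phi1 : Hom (nob X 1%N) (nob Y 1%N)) (phi2 : Hom (nob X 2%N) (nob Y 2%N)),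
        mcomp (nmo Y 1%N) phi1 = mcomp phi2 (nmo X 1%N) ->
        exists phi : forall i, Hom (nob X i) (nob Y i),
          [/\ phi 1%N = phi1, phi 2%N = phi2 & is_nmor phi];
  N4 : forall X Y : nSseq, N X -> N Y ->
      forall (phi1 : Hom (nob X 1%N) (nob Y 1%N)) (phi2 : Hom (nob X 2%N) (nob Y 2%N)),
        mcomp (nmo Y 1%N) phi1 = mcomp phi2 (nmo X 1%N) ->
        exists phi : forall i, Hom (nob X i) (nob Y i),
          [/\ phi 1%N = phi1, phi 2%N = phi2, is_nmor phi
            & exists Z : nSseq, is_cone phi Z /\ N Z] }.

End NSeq.

Record tensor_data (C : precat) (S : endofunctor C) := TensorData {
  tens : Obj C -> Obj C -> Obj C;
  tensm : forall (A A' B B' : Obj C), Hom A A' -> Hom B B' -> Hom (tens A B) (tens A' B');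
  tunit : Obj C;
  tassoc : forall A B D : Obj C, Hom (tens (tens A B) D) (tens A (tens B D));
  tlam : forall A : Obj C, Hom (tens tunit A) A;
  trho : forall A : Obj C, Hom (tens A tunit) A;
  tgam : forall A B : Obj C, Hom (tens A B) (tens B A);
  tl : forall A B : Obj C, Hom (tens A (Fo S B)) (Fo S (tens A B));
  tr : forall A B : Obj C, Hom (tens (Fo S A) B) (Fo S (tens A B)) }.
Arguments tensm {C S} t {A A' B B'}.

Section Tensor.
Variables (C : precat) (S : endofunctor C) (m : nat) (T : tensor_data S).
Local Notation n := m.+1.
Local Notation Obj := (Obj C).
Local Notation "A (x) B" := (tens T A B) (at level 40).
Local Notation "f (.) g" := (tensm T f g) (at level 40).
Local Notation I := (tunit T).
Local Notation Sg := (Fo S).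
Local Notation Sm := (Fm S).

Definition tensl_nseq (A : Obj) (X : nSseq S m) : nSseq S m :=
  @NSeq C S m (fun i => A (x) nob X i) (fun i => idm A (.) nmo X i)
    (mcomp (tl T A (nob X 1%N)) (idm A (.) nlast X)).

Definition tensr_nseq (A : Obj) (X : nSseq S m) : nSseq S m :=
  @NSeq C S m (fun i => nob X i (x) A) (fun i => nmo X i (.) idm A)
    (mcomp (tr T (nob X 1%N) A) (nlast X (.) idm A)).

Record is_symmetric_monoidal : Prop := {
  tens_id : forall A B : Obj, idm A (.) idm B = idm (A (x) B);
  tens_comp : forall (A1 A2 A3 B1 B2 B3 : Obj) (f : Hom A1 A2) (f' : Hom A2 A3)
            (g : Hom B1 B2) (g' : Hom B2 B3),
            mcomp f' f (.) mcomp g' g = mcomp (f' (.) g') (f (.) g);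
  tens_addl : forall (A A' B B' : Obj) (f f' : Hom A A') (g : Hom B B'),
          (f + f') (.) g = f (.) g + f' (.) g;
  tens_addr : forall (A A' B B' : Obj) (f : Hom A A') (g g' : Hom B B'),
          f (.) (g + g') = f (.) g + f (.) g';
  assoc_iso : forall A B D : Obj, is_iso (tassoc T A B D);
  assoc_nat : forall (A A' B B' D D' : Obj) (f : Hom A A') (g : Hom B B') (h : Hom D D'),
            mcomp (tassoc T A' B' D') ((f (.) g) (.) h)
            = mcomp (f (.) (g (.) h)) (tassoc T A B D);
  lam_iso : forall A : Obj, is_iso (tlam T A);
  lam_nat : forall (A A' : Obj) (f : Hom A A'),
            mcomp (tlam T A') (idm I (.) f) = mcomp f (tlam T A);
  rho_iso : forall A : Obj, is_iso (trho T A);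
  rho_nat : forall (A A' : Obj) (f : Hom A A'),
            mcomp (trho T A') (f (.) idm I) = mcomp f (trho T A);
  gam_iso : forall A B : Obj, is_iso (tgam T A B);
  gam_nat : forall (A A' B B' : Obj) (f : Hom A A') (g : Hom B B'),
            mcomp (tgam T A' B') (f (.) g) = mcomp (g (.) f) (tgam T A B);
  pentagon : forall A B D E : Obj,
         mcomp (tassoc T A B (D (x) E)) (tassoc T (A (x) B) D E)
         = mcomp (idm A (.) tassoc T B D E)
             (mcomp (tassoc T A (B (x) D) E) (tassoc T A B D (.) idm E));
  triangle : forall A B : Obj,
         mcomp (idm A (.) tlam T B) (tassoc T A I B) = trho T A (.) idm B;
  hexagon : forall A B D : Obj,
         mcomp (tassoc T B D A) (mcomp (tgam T A (B (x) D)) (tassoc T A B D))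
         = mcomp (idm B (.) tgam T A D)
             (mcomp (tassoc T B A D) (tgam T A B (.) idm D));
  gam_sym : forall A B : Obj, mcomp (tgam T B A) (tgam T A B) = idm (A (x) B) }.

Record is_tensor_nangulated (N : nSseq S m -> Prop) : Prop := {
  tn_nangulated : is_nangulated N;
  tn_symmon : is_symmetric_monoidal;
  tl_iso : forall A B : Obj, is_iso (tl T A B);
  tl_nat : forall (A A' B B' : Obj) (f : Hom A A') (g : Hom B B'),
            mcomp (tl T A' B') (f (.) Sm g) = mcomp (Sm (f (.) g)) (tl T A B);
  tr_iso : forall A B : Obj, is_iso (tr T A B);
  tr_nat : forall (A A' B B' : Obj) (f : Hom A A') (g : Hom B B'),
            mcomp (tr T A' B') (Sm f (.) g) = mcomp (Sm (f (.) g)) (tr T A B);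
  tensl_nangle : forall (A : Obj) (X : nSseq S m), N X -> N (tensl_nseq A X);
  tensr_nangle : forall (A : Obj) (X : nSseq S m), N X -> N (tensr_nseq A X);
  lam_Sigma : forall A : Obj, tlam T (Sg A) = mcomp (Sm (tlam T A)) (tl T I A);
  rho_Sigma : forall A : Obj, trho T (Sg A) = mcomp (Sm (trho T A)) (tr T A I);
  l_r_anticomm : forall A B : Obj,
         mcomp (Sm (tl T A B)) (tr T A (Sg B)) = - mcomp (Sm (tr T A B)) (tl T (Sg A) B) }.

End Tensor.

Section Grothendieck.
Variables (C : precat) (S : endofunctor C) (m : nat) (N : nSseq S m -> Prop).
Local Notation n := m.+1.
Local Notation Obj := (Obj C).

Definition isoclass_of (A : Obj) : Obj -> Prop :=
  fun B => exists f : Hom A B, is_iso f.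

Definition IsoClass := {P : Obj -> Prop | exists A : Obj, P = isoclass_of A}.
HB.instance Definition _ := gen_eqMixin IsoClass.
HB.instance Definition _ := gen_choiceMixin IsoClass.

Definition isocl (A : Obj) : IsoClass :=
  exist _ (isoclass_of A) (ex_intro _ A erefl).

Definition FC := {freeg IsoClass / int}.
Definition gen (A : Obj) : FC := << isocl A >>.

Definition chi (X : nSseq S m) : FC :=
  \sum_(1 <= i < n.+1) gen (nob X i) *~ ((-1) ^+ i.+1).

(* R(C): the subgroup generated by the chi(X), X an n-angle, and by <0> if
   n is even *)
Definition RCprop (x : FC) : Prop :=
  forall P : FC -> Prop,
    P 0 -> (forall y z, P y -> P z -> P (y - z)) ->
    (forall X, N X -> P (chi X)) ->
    (~~ odd n -> forall Z : Obj, is_zero_obj Z -> P (gen Z)) ->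
    P x.

Definition RC : {pred FC} := fun x => `[< RCprop x >].

Lemma RC_zmod_closed : zmod_closed RC.
Proof.
rewrite /GRing.zmod_closed /Algebra.zmod_closed /=; split.
  by rewrite unfold_in; apply/asboolP => P P0 _ _ _.
move=> x y; rewrite !unfold_in => /asboolP Hx /asboolP Hy.
apply/asboolP => P P0 PB Pchi Pz.
by apply: (PB); [exact: (Hx P) | exact: (Hy P)].
Qed.

HB.instance Definition _ := GRing.isZmodClosed.Build FC RC RC_zmod_closed.

Definition K0 : zmodType := Quotient.quot RC.
Definition K0cl (A : Obj) : K0 := \pi_K0 (gen A).

End Grothendieck.

(* Extend <A> * <B> := <A (x) B> biadditively to the free group F(C).  It is
   well defined on isomorphism classes because (x) is a functor, and it is
   commutative, associative and unital because gamma, alpha and lambda are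
   isomorphisms.  It descends to K_0(C) = F(C)/R(C) because R(C) is an ideal:
   for n odd R(C) is generated by the chi(X) alone, and A (x) - sends n-angles
   to n-angles, so <A> * chi(X) = chi(A (x) X) lies in R(C). *)
From Pilot Require Import Defs.
From HB Require Import structures.
From mathcomp Require Import all_boot all_algebra boolp freeg ring_quotient generic_quotient.

Set Implicit Arguments.
Unset Strict Implicit.
Unset Printing Implicit Defensive.

Import GRing.Theory.
Local Open Scope ring_scope.
Local Open Scope quotient_scope.

Local Notation Hom := Defs.Hom.

Section IsoClasses.
Variable C : precat.
Hypothesis HC : is_additive_cat C.
Implicit Types A B D : Obj C.

Lemma is_iso_id A : is_iso (idm A).
Proof. by exists (idm A); rewrite (comp1f HC). Qed.

Lemma is_iso_comp A B D (f : Hom A B) (g : Hom B D) :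
  is_iso f -> is_iso g -> is_iso (mcomp g f).
Proof.
move=> [f' [f'f ff']] [g' [g'g gg']]; exists (mcomp f' g'); split.
- by rewrite (Defs.compA HC) -[mcomp (mcomp f' g') g](Defs.compA HC) g'g (compf1 HC).
- by rewrite -(Defs.compA HC) [mcomp f (mcomp f' g')](Defs.compA HC) ff' (comp1f HC).
Qed.

Lemma isoclass_of_iso A B (f : Hom A B) : is_iso f -> isoclass_of A = isoclass_of B.
Proof.
move=> fi; have [f' [f'f ff']] := fi.
have f'i : is_iso f' by exists f.
apply/funext => X; apply/propext; split=> -[g gi].
- by exists (mcomp g f'); apply: is_iso_comp.
- by exists (mcomp g f); apply: is_iso_comp.
Qed.

Lemma eq_IsoClass (P Q : Obj C -> Prop) (hP : exists A, P = isoclass_of A)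
  (hQ : exists A, Q = isoclass_of A) :
  P = Q -> exist _ P hP = exist _ Q hQ :> IsoClass C.
Proof. by move=> PQ; subst Q; congr exist; apply: Prop_irrelevance. Qed.

Lemma gen_iso A B (f : Hom A B) : is_iso f -> gen A = gen B.
Proof. by move=> fi; congr << _ >>; apply: eq_IsoClass; apply: isoclass_of_iso fi. Qed.

Definition rep (c : IsoClass C) : Obj C := projT1 (cid (proj2_sig c)).

Lemma repP c : proj1_sig c = isoclass_of (rep c).
Proof. exact: projT2 (cid (proj2_sig c)). Qed.

Lemma repK c : isocl (rep c) = c.
Proof. by case: c => P hP; apply: eq_IsoClass; rewrite -repP. Qed.

Lemma rep_isocl A : exists f : Hom (rep (isocl A)) A, is_iso f.
Proof.
have : isoclass_of A A by exists (idm A); apply: is_iso_id.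
by rewrite -[isoclass_of A]/(proj1_sig (isocl A)) repP.
Qed.

Lemma gen_rep c : gen (rep c) = << c >>.
Proof. by rewrite /gen repK. Qed.

End IsoClasses.

Section FreeAbelianGroup.
Variable K : choiceType.
Implicit Types D : {freeg K / int}.

HB.instance Definition _ (M : lmodType int) (f : K -> M) :=
  GRing.isZmodMorphism.Build _ _ (fglift f) (lift_is_additive f).

Lemma raddf_freegE (M : zmodType) (f : {additive {freeg K / int} -> M}) D :
  f D = \sum_(z <- dom D) f << z >> *~ coeff z D.
Proof.
rewrite -{1}(freeg_sumE D) raddf_sum.
apply: eq_bigr => z _.
have -> : << coeff z D *g z >> = << z >> *~ coeff z D by rewrite freegU_mulz intz.
exact: raddfMz.
Qed.

Lemma freeg_morphism_eq (M : zmodType) (f g : {freeg K / int} -> M) :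
  zmod_morphism f -> zmod_morphism g -> (forall z, f << z >> = g << z >>) -> f =1 g.
Proof.
move=> fM gM fg D.
have /= -> := raddf_freegE (HB.pack f (GRing.isZmodMorphism.Build _ _ f fM)) D.
have /= -> := raddf_freegE (HB.pack g (GRing.isZmodMorphism.Build _ _ g gM)) D.
by apply: eq_bigr => z _; rewrite fg.
Qed.

Lemma fglift_freegE (M : lmodType int) (f : K -> M) D :
  fglift f D = \sum_(z <- dom D) coeff z D *: f z.
Proof.
rewrite raddf_freegE; apply: eq_bigr => z _ /=.
by rewrite liftU scale1r -scaler_int intz.
Qed.

End FreeAbelianGroup.

Section TensorOnFreeGroup.
Variables (C : precat) (S : endofunctor C) (T : tensor_data S).
Hypothesis HC : is_additive_cat C.
Hypothesis HM : is_symmetric_monoidal T.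
Local Notation "A (x) B" := (tens T A B) (at level 40).

Definition mulF (x y : FC C) : FC C :=
  fglift (fun a => fglift (fun b => gen (rep a (x) rep b)) y) x.

Lemma mulFBl x1 x2 y : mulF (x1 - x2) y = mulF x1 y - mulF x2 y.
Proof. exact: lift_is_additive. Qed.

Lemma mulFBr x y1 y2 : mulF x (y1 - y2) = mulF x y1 - mulF x y2.
Proof.
rewrite /mulF !fglift_freegE -sumrB.
by apply: eq_bigr => z _; rewrite raddfB scalerBr.
Qed.

HB.instance Definition _ x := GRing.isZmodMorphism.Build _ _ (mulF x) (mulFBr x).

Lemma tensm_iso (A A' B B' : Obj C) (f : Hom A A') (g : Hom B B') :
  is_iso f -> is_iso g -> is_iso (tensm T f g).
Proof.
move=> [f' [f'f ff']] [g' [g'g gg']]; exists (tensm T f' g').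
by rewrite -!(tens_comp HM) f'f ff' g'g gg' !(tens_id HM).
Qed.

Lemma mulF_gen (A B : Obj C) : mulF (gen A) (gen B) = gen (A (x) B).
Proof.
rewrite /mulF /gen !liftU !scale1r.
have [f fi] := rep_isocl HC A; have [g gi] := rep_isocl HC B.
exact: gen_iso (tensm_iso fi gi).
Qed.

Lemma mulF_genU (a b : IsoClass C) : mulF << a >> << b >> = gen (rep a (x) rep b).
Proof. by rewrite -gen_rep -[<< b >>]gen_rep mulF_gen. Qed.

Lemma mulF_genUl (a : IsoClass C) (B : Obj C) : mulF << a >> (gen B) = gen (rep a (x) B).
Proof. by rewrite -gen_rep mulF_gen. Qed.

Lemma mulF_genUr (A : Obj C) (b : IsoClass C) : mulF (gen A) << b >> = gen (A (x) rep b).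
Proof. by rewrite -gen_rep mulF_gen. Qed.

Lemma mulFC : commutative mulF.
Proof.
move=> x y; move: x; apply: freeg_morphism_eq => [? ?|? ?|a]; rewrite ?(mulFBl, mulFBr) //.
move: y; apply: freeg_morphism_eq => [? ?|? ?|b]; rewrite ?(mulFBl, mulFBr) //.
by rewrite !mulF_genU; apply: (gen_iso HC (gam_iso HM _ _)).
Qed.

Lemma mulFA : associative mulF.
Proof.
move=> x y z; move: x; apply: freeg_morphism_eq => [? ?|? ?|a]; rewrite ?(mulFBl, mulFBr) //.
move: y; apply: freeg_morphism_eq => [? ?|? ?|b]; rewrite ?(mulFBl, mulFBr) //.
move: z; apply: freeg_morphism_eq => [? ?|? ?|c]; rewrite ?(mulFBl, mulFBr) //.
rewrite (mulF_genU b c) (mulF_genU a b) mulF_genUl mulF_genUr.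
exact/esym/(gen_iso HC (assoc_iso HM _ _ _)).
Qed.

Lemma mul1F : left_id (gen (tunit T)) mulF.
Proof.
apply: freeg_morphism_eq => [? ?|? ?|c]; rewrite ?mulFBr //.
by rewrite mulF_genUr (gen_iso HC (lam_iso HM _)) gen_rep.
Qed.

End TensorOnFreeGroup.

Section QuotientProduct.
Variables (V : zmodType) (I : zmodClosed V) (mul : V -> V -> V).
Hypothesis mulBl : forall x1 x2 y, mul (x1 - x2) y = mul x1 y - mul x2 y.
Hypothesis mulBr : forall x y1 y2, mul x (y1 - y2) = mul x y1 - mul x y2.
Hypothesis mul_ideall : forall x y, x \in I -> mul x y \in I.
Hypothesis mul_idealr : forall x y, y \in I -> mul x y \in I.
Local Notation Q := (Quotient.quot I).

Definition quot_mul (a b : Q) : Q := \pi_Q (mul (repr a) (repr b)).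

Lemma pi_quot_mul x y : \pi_Q (mul x y) = quot_mul (\pi_Q x) (\pi_Q y).
Proof.
apply/eqP; rewrite -Quotient.idealrBE.
set x' := repr _; set y' := repr _.
have xx' : x - x' \in I by rewrite Quotient.idealrBE reprK.
have yy' : y - y' \in I by rewrite Quotient.idealrBE reprK.
have -> : mul x y - mul x' y' = mul (x - x') y + mul x' (y - y').
  by rewrite mulBl mulBr addrA subrK.
by apply: rpredD; [apply: mul_ideall | apply: mul_idealr].
Qed.

Lemma quot_piP (a : Q) : exists x, a = \pi_Q x.
Proof. by exists (repr a); rewrite reprK. Qed.

Lemma quot_mulA : associative mul -> associative quot_mul.
Proof.
move=> mulA a b c.
have [x ->] := quot_piP a; have [y ->] := quot_piP b; have [z ->] := quot_piP c.
by rewrite -!pi_quot_mul mulA.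
Qed.

Lemma quot_mulC : commutative mul -> commutative quot_mul.
Proof.
move=> mulC a b; have [x ->] := quot_piP a; have [y ->] := quot_piP b.
by rewrite -!pi_quot_mul mulC.
Qed.

Lemma quot_mul1 e : left_id e mul -> left_id (\pi_Q e) quot_mul.
Proof. by move=> mul1 a; have [x ->] := quot_piP a; rewrite -pi_quot_mul mul1. Qed.

Lemma quot_mulDl : left_distributive quot_mul +%R.
Proof.
move=> a b c.
have [x ->] := quot_piP a; have [y ->] := quot_piP b; have [z ->] := quot_piP c.
have mul0 : mul 0 z = 0 by rewrite -{1}(subrr z) mulBl subrr.
have mulN u : mul (- u) z = - mul u z by rewrite -sub0r mulBl mul0 sub0r.
have mulDl : mul (x + y) z = mul x z + mul y z.
  by rewrite -{1}[y]opprK mulBl mulN opprK.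
by rewrite -raddfD /= -!pi_quot_mul mulDl raddfD.
Qed.

End QuotientProduct.

Section GrothendieckRing.
Variables (C : precat) (S : endofunctor C) (m : nat) (N : nSseq S m -> Prop)
  (T : tensor_data S).
Hypothesis HT : is_tensor_nangulated T N.
Let HC := nang_additive (tn_nangulated HT).
Let HM := tn_symmon HT.

Lemma chi_RC X : N X -> chi X \in RC N.
Proof. by move=> NX; rewrite unfold_in; apply/asboolP => P _ _ Pchi _; apply: Pchi. Qed.

Lemma mulF_gen_chi A (X : nSseq S m) : mulF T (gen A) (chi X) = chi (tensl_nseq T A X).
Proof.
rewrite /chi raddf_sum; apply: eq_bigr => i _ /=.
by rewrite raddfMz /= (mulF_gen HC HM).
Qed.

Lemma mulF_chi_RC X y : N X -> mulF T (chi X) y \in RC N.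
Proof.
move=> NX; rewrite raddf_freegE; apply: rpred_sum => c _ /=; apply: rpredMz.
rewrite (mulFC HC HM) -gen_rep mulF_gen_chi; apply: chi_RC; exact: (tensl_nangle HT).
Qed.

Hypothesis n_odd : odd m.+1.

Lemma mulF_RCl x y : x \in RC N -> mulF T x y \in RC N.
Proof.
rewrite unfold_in => /asboolP RCx.
apply: (RCx (fun x => mulF T x y \in RC N)) => [|a b Ra Rb|X NX|].
- by rewrite -(subrr 0) mulFBl subrr rpred0.
- by rewrite mulFBl rpredB.
- exact: mulF_chi_RC.
- by rewrite n_odd.
Qed.

Lemma mulF_RCr x y : y \in RC N -> mulF T x y \in RC N.
Proof. by rewrite (mulFC HC HM); apply: mulF_RCl. Qed.

Definition K0mul : K0 N -> K0 N -> K0 N := quot_mul (I := RC N) (mulF T).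

Lemma K0mulA : associative K0mul.
Proof. exact: quot_mulA (mulFBl T) (mulFBr T) mulF_RCl mulF_RCr (mulFA HC HM). Qed.

Lemma K0mulC : commutative K0mul.
Proof. exact: quot_mulC (mulFBl T) (mulFBr T) mulF_RCl mulF_RCr (mulFC HC HM). Qed.

(* [exact] instead of [exact:] below: the quotient is reached through
   different structure instances in K0 and in quot_mul, which agree only up
   to conversion. *)
Lemma K0mul1 : left_id (K0cl N (tunit T)) K0mul.
Proof. by move=> a; exact (quot_mul1 (mulFBl T) (mulFBr T) mulF_RCl mulF_RCr (mul1F HC HM) a). Qed.

Lemma K0mulDl : left_distributive K0mul +%R.
Proof. exact: quot_mulDl (mulFBl T) (mulFBr T) mulF_RCl mulF_RCr. Qed.

Lemma K0mul_cl A B : K0mul (K0cl N A) (K0cl N B) = K0cl N (tens T A B).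
Proof.
rewrite /K0cl -(mulF_gen HC HM).
exact (esym (pi_quot_mul (mulFBl T) (mulFBr T) mulF_RCl mulF_RCr _ _)).
Qed.

End GrothendieckRing.

Theorem lemma5p1 (C : precat) (S : endofunctor C) (n : nat)
    (N : nSseq S n.-1 -> Prop) (T : tensor_data S) :
  (3 <= n)%N -> odd n -> is_tensor_nangulated T N ->
  exists (mul : K0 N -> K0 N -> K0 N) (one : K0 N),
    [/\ associative mul, commutative mul,
        left_id one mul /\ right_id one mul,
        left_distributive mul +%R /\ right_distributive mul +%R
      & forall A B : Obj C, mul (K0cl N A) (K0cl N B) = K0cl N (tens T A B)].
Proof.
move=> n_ge3 n_odd HT.
have m_odd : odd (n.-1).+1 by rewrite prednK // (leq_trans _ n_ge3).
have mulC := K0mulC HT m_odd; have mul1 := K0mul1 HT m_odd.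
have mulDl := K0mulDl HT m_odd.
exists (K0mul T), (K0cl N (tunit T)); split.
- exact: K0mulA.
- exact: mulC.
- by split=> // a; rewrite mulC mul1.
- by split=> // a b c; rewrite !(mulC a) mulDl.
- exact: K0mul_cl.
Qed.
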